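(* Consider the mesoscopic contact process with sexual reproduction $(\xi_t)$ on $\mathbb{Z}$ with patch size $N\ge 2$, dispersal range $M$ and birth parameters $a,b\ge0$, started from $\xi_0=\mathbf{1}_x$. Call a collision the event that two offspring produced by parents in patch $x$ are sent to the same patch $y\ne x$. For all $M$ sufficiently large: (1) if $a<4$, $P(\text{collision}\mid\xi_0=\mathbf{1}_x)\le M^{-1/3}\big(1/2+bN(1-a/4)^{-1}\big)$; (2) if $a=4$, $P(\text{collision}\mid\xi_0=\mathbf{1}_x)\le M^{-1/3}\big(1/2+(b/2)(N+2)^2\big)$; (3) if $a>4$, $P(\text{collision}\mid\xi_0=\mathbf{1}_x)\le M^{-1/3}\big(1/2+b(a/4-1)^{-2}(a/4)^{N+2}\big)$.
   Context: For $x,y\in\mathbb{Z}$ write $x\sim y$ iff $x\neq y$ and $|x-y|\le M$. The process $\xi_t:\mathbb{Z}\to\{0,\dots,N\}$ counts individuals per patch: $\xi(x)\to\xi(x)-1$ at rate $\xi(x)$; $\xi(x)\to\xi(x)+1$ at rate $\frac{a}{N(N-1)}\xi(x)(\xi(x)-1)(N-\xi(x))$ (offspring of parents in patch $x$ staying in $x$) plus, for each $y\sim x$, rate $\frac{1}{2M}\frac{b}{N(N-1)}\xi(y)(\xi(y)-1)(N-\xi(x))$ (offspring of parents in patch $y$ sent to patch $x$). $\mathbf{1}_x$ is the configuration with $N$ individuals at $x$ and none elsewhere. *)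

From HB Require Import structures.
From mathcomp Require Import all_boot all_order all_algebra.
From mathcomp Require Import all_classical all_reals all_analysis.
Set Implicit Arguments. Unset Strict Implicit. Unset Printing Implicit Defensive.
Import Order.TTheory GRing.Theory Num.Theory.
Local Open Scope ring_scope.

(* Configurations: xi : int -> nat, xi y = number of individuals in patch y. *)
Definition config := int -> nat.

Definition one_at (N : nat) (x : int) : config := fun y => if y == x then N else 0%N.

Definition nbr (M : nat) (y z : int) : bool := (y != z) && (`|y - z|%N <= M)%N.

(* Elementary transitions ("events"):
   inl z        : death of an individual in patch z  (xi z -> xi z - 1)
   inr (w, z)   : birth of an offspring of parents in patch w, placed in patch z
                  (xi z -> xi z + 1); z = w is a birth staying in w,
                  z ~ w is a dispersal from w to z. *)
Definition event := (int + (int * int))%type.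

Section Process.
Variables (R : realType) (N M : nat) (a b : R) (x : int).

(* Jump rates of the mesoscopic contact process with sexual reproduction.
   Products are taken in nat; they coincide with the paper's expressions
   since 0 <= xi <= N on every reachable configuration. *)
Definition rate (xi : config) (e : event) : R :=
  match e with
  | inl z => (xi z)%:R
  | inr (w, z) =>
      if z == w then
        a / (N * (N - 1))%:R * (xi w * (xi w).-1 * (N - xi w))%:R
      else if nbr M z w then
        (2 * M)%:R^-1 * (b / (N * (N - 1))%:R) * (xi w * (xi w).-1 * (N - xi z))%:R
      else 0
  end.

Definition total_rate (xi : config) : \bar R := \esum_(e in setT) (rate xi e)%:E.

Definition step (xi : config) (e : event) : config :=
  match e with
  | inl z => fun y => if y == z then (xi y).-1 else xi y
  | inr (w, z) => fun y => if y == z then (xi y).+1 else xi y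
  end.

(* H y = true iff some offspring of parents in patch x has already been sent
   to patch y <> x. *)
Definition upd_hit (H : int -> bool) (e : event) : int -> bool :=
  match e with
  | inr (w, z) => if (w == x) && (z != x) then (fun y => (y == z) || H y) else H
  | inl _ => H
  end.

Definition collides (H : int -> bool) (e : event) : bool :=
  match e with
  | inr (w, z) => [&& w == x, z != x & H z]
  | inl _ => false
  end.

(* Pcol n xi H = probability that a collision happens within the next n jumps
   of the process (embedded jump chain: event e occurs with probability
   rate xi e / total_rate xi; if the total rate is 0 the process is absorbed
   and every term vanishes). *)
Fixpoint Pcol (n : nat) (xi : config) (H : int -> bool) : \bar R :=
  match n with
  | 0%N => 0%E
  | n'.+1 =>
      \esum_(e in setT)
        ((rate xi e / fine (total_rate xi))%:E *
         (if collides H e then 1%E else Pcol n' (step xi e) (upd_hit H e)))%E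
  end.

End Process.

Definition P_collision (R : realType) (N M : nat) (a b : R) (x : int) : \bar R :=
  ereal_sup [set Pcol N M a b x n (one_at N x) (fun _ => false) | n in [set: nat]].

From HB Require Import structures.
From mathcomp Require Import all_boot all_order all_algebra.
From mathcomp Require Import all_classical all_reals all_analysis.
From mathcomp Require Import lra ring zify.
Set Implicit Arguments. Unset Strict Implicit. Unset Printing Implicit Defensive.
Import Order.TTheory GRing.Theory Num.Theory.
Local Open Scope ring_scope.

(* The collision probability is in fact O(1/M).  Let lam = a + 2b + 2, U = lam^N and
   w_j = U - lam^(N+1-j) for j >= 2, w_0 = w_1 = 0.  Before the first collision every
   patch y <> x holds at most one individual and has already been hit by an offspring
   from x, so the only relevant moves are deaths, births and dispersals at x.  The
   potential f = (k + U) w_(xi x) / M, where k counts the hit patches in the window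
   [x - M, x + M], is a supermartingale for the jump chain in which a collision is
   scored 1: deaths at x outweigh births there by a margin proportional to b, which
   pays for the dispersals, each of rate at most b xi(x) / (2M), which raise f by at
   most w / M unless they hit an already hit patch.  Hence the collision probability
   is at most f(1_x) <= U^2 / M, which is below M^(-1/3) / 2 as soon as M > (2 U^2)^3. *)

Lemma ler_sum_supp (R : numDomainType) (T : eqType) (s E : seq T) (F : T -> R) :
  uniq s -> uniq E -> (forall e, F e != 0 -> e \in E) -> (forall e, e \in E -> 0 <= F e) ->
  \sum_(e <- s) F e <= \sum_(e <- E) F e.
Proof.
move=> us uE suppF F0.
rewrite (bigID (mem E)) /= [X in _ + X]big1 ?addr0; last first.
  by move=> e eE; apply/eqP; apply: contraNT eE => /suppF.
rewrite -big_filter (perm_big [seq e <- E | e \in s]); last first.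
  by apply: uniq_perm; rewrite ?filter_uniq // => e; rewrite !mem_filter andbC.
rewrite big_filter [leRHS](bigID (mem s)) /= lerDl.
by rewrite big_seq_cond sumr_ge0 // => e /andP[/F0].
Qed.

Lemma mass_action_le (R : realFieldType) (N j i : nat) (c : R) :
  (2 <= N)%N -> (j <= N)%N -> 0 <= c ->
  c / (N * (N - 1))%:R * (j * j.-1 * (N - i))%:R <= c * j%:R.
Proof.
move=> N2 jN c0.
have NN : 0 < (N * (N - 1))%:R :> R by rewrite ltr0n; lia.
rewrite -mulrA ler_wpM2l // ler_pdivrMl // mulrC -natrM ler_nat -mulnA leq_mul2l.
by rewrite mulnC leq_mul ?orbT //; lia.
Qed.

Lemma sum_mul_count (R : pzSemiRingType) (T : Type) (s : seq T) (P : pred T) (c q : R) :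
  \sum_(z <- s) c * ((P z)%:R + q) = c * ((count P s)%:R + (size s)%:R * q).
Proof.
elim: s => [|z s IH]; first by rewrite big_nil !mul0r addr0 mulr0.
rewrite big_cons IH -mulrDr /= natrD -natr1 mulrDl mul1r.
by rewrite addrACA [q + _]addrC.
Qed.

Lemma drift_budget (R : realFieldType) (a b j m k u v D1 D2 : R) :
  0 <= b -> 0 <= j -> 1 <= m -> 0 <= k -> 0 <= v -> v <= u -> 2 * b <= D1 - a * D2 ->
  - (j * ((k + u) * D1 / m)) + a * j * ((k + u) * D2 / m)
    + (2 * m)^-1 * (b * j) * (k + (2 * m + 1) * (v / m)) <= 0.
Proof.
move=> b0 j0 m1 k0 v0 vu hD.
have m0 : 0 < m by lra.
have -> : - (j * ((k + u) * D1 / m)) + a * j * ((k + u) * D2 / m)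
    + (2 * m)^-1 * (b * j) * (k + (2 * m + 1) * (v / m))
  = j / m * (b * (k + 2 * v + v / m) / 2 - (k + u) * (D1 - a * D2)).
  by field; lra.
apply: mulr_ge0_le0; first exact: divr_ge0 j0 (ltW m0).
rewrite subr_le0.
have vm : v / m <= v by rewrite ler_pdivrMr // ler_peMr //.
have : 2 * b * (k + u) <= (k + u) * (D1 - a * D2) by rewrite mulrC ler_wpM2l //; lra.
have : b * (k + 2 * v + v / m) <= b * (4 * k + 4 * u) by rewrite ler_wpM2l //; lra.
lra.
Qed.

Lemma le_powR_cbrt (R : realType) (C m : R) : 1 <= C -> C ^+ 3 < m -> C / m <= m `^ (- 3^-1).
Proof.
move=> C1 Cm.
have m0 : 0 < m by apply: lt_trans Cm; rewrite exprn_gt0 //; lra.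
set q := m `^ 3^-1.
have q3 : q ^+ 3 = m by rewrite /q -powR_mulrn ?powR_ge0 // -powRrM mulVf ?powRr1 ?ltW.
have Cq : C < q.
  rewrite ltNge; apply/negP => qC; move: Cm; rewrite -q3 ltNge.
  by rewrite lerXn2r ?nnegrE ?powR_ge0 //; lra.
have q0 : 0 < q by lra.
rewrite powRN -/q -{1}q3 ler_pdivrMr ?exprn_gt0 // exprS mulrA mulVf ?gt_eqF // mul1r.
by rewrite expr2 (le_trans (ltW Cq)) // ler_peMl //; lra.
Qed.

Section Weights.
Variables (R : realFieldType) (N : nat) (a b : R).
Hypotheses (ha : 0 <= a) (hb : 0 <= b).

Definition lam : R := a + 2 * b + 2.
Definition U : R := lam ^+ N.
Definition w (j : nat) : R := if (j <= 1)%N then 0 else U - lam ^+ (N.+1 - j).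

Lemma lam_ge2 : 2 <= lam. Proof. by rewrite /lam; move: ha hb; lra. Qed.

Lemma lamX_le m n : (m <= n)%N -> lam ^+ m <= lam ^+ n.
Proof. by move=> mn; apply: ler_weXn2l => //; have := lam_ge2; lra. Qed.

Lemma U_ge1 : 1 <= U.
Proof. by apply: exprn_ege1; have := lam_ge2; lra. Qed.

Lemma U_ge0 : 0 <= U.
Proof. by have := U_ge1; lra. Qed.

Lemma wE j : (0 < j)%N -> w j = U - lam ^+ (N.+1 - j).
Proof.
rewrite /w; case: ifP => // j1 j0; have -> : j = 1%N by lia.
by rewrite subSS subn0 subrr.
Qed.

Lemma w_ge0 j : 0 <= w j.
Proof. by rewrite /w; case: ifP => // j1; rewrite subr_ge0 lamX_le //; lia. Qed.

Lemma w_le_U j : w j <= U.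
Proof.
rewrite /w; case: ifP => _; first by have := U_ge1; lra.
by rewrite lerBlDr lerDl exprn_ge0 //; have := lam_ge2; lra.
Qed.

Lemma w_leS j : w j <= w j.+1.
Proof.
case: j => [|j]; first by rewrite /w.
by rewrite !wE // lerD2l lerN2 lamX_le // leq_sub2l.
Qed.

(* (w_j - w_(j-1)) - a (w_(j+1) - w_j) = lam^(N-j) (lam - 1) (lam - a), and lam - a = 2b + 2. *)
Lemma w_drift j : (2 <= j <= N)%N ->
  2 * b <= (w j - w j.-1) - a * (w j.+1 - w j).
Proof.
case/andP=> j2 jN; rewrite !wE; try lia.
have -> : (N.+1 - j.-1 = (N - j).+2)%N by lia.
have -> : (N.+1 - j = (N - j).+1)%N by lia.
have -> : (N.+1 - j.+1 = N - j)%N by lia.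
have p1 : 1 <= lam ^+ (N - j) by apply: exprn_ege1; have := lam_ge2; lra.
rewrite !exprS; set p := lam ^+ (N - j).
have -> : U - lam * p - (U - lam * (lam * p)) - a * (U - p - (U - lam * p))
  = p * (lam - 1) * (2 * b + 2) by rewrite /lam; ring.
have : 1 <= p * (lam - 1) by rewrite -[1]mul1r ler_pM //; have := lam_ge2; lra.
by move: hb; nra.
Qed.

End Weights.

Section CollisionBound.
Variables (R : realType) (N M : nat) (a b : R) (x : int).
Hypotheses (hN : (2 <= N)%N) (ha : 0 <= a) (hb : 0 <= b) (hM : (1 <= M)%N).

Local Notation rate := (rate N M a b).
Local Notation U := (U N a b).
Local Notation w := (w N a b).

Definition window : seq int := [seq x + i%:Z - M%:Z | i <- iota 0 (2 * M).+1].

Arguments window : simpl never.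

Lemma window_uniq : uniq window.
Proof. by rewrite map_inj_uniq ?iota_uniq // => i j /= /eqP; rewrite -!addrA; lia. Qed.

Lemma size_window : size window = (2 * M).+1.
Proof. by rewrite size_map size_iota. Qed.

Lemma nbr_in_window z : nbr M z x -> z \in window.
Proof.
case/andP=> _ zx; apply/mapP; exists `|(z - x + M%:Z)%R|%N; last by lia.
by rewrite mem_iota; lia.
Qed.

Definition hits (H : int -> bool) : nat := count H window.

Lemma hits_upd H z : z != x -> (hits (upd_hit x H (inr (x, z))) <= (hits H).+1)%N.
Proof.
move=> zx; have -> : upd_hit x H (inr (x, z)) = predU (pred1 z) H by rewrite /= eqxx zx.
have z1 : (count (pred1 z) window <= 1)%N by rewrite count_uniq_mem ?window_uniq ?leq_b1.
rewrite /hits -(leq_add2r (count (predI (pred1 z) H) window)) count_predUI.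
by rewrite addnC -addn1 -addnA leq_add2l (leq_trans z1) ?leq_addr.
Qed.

Definition pot (xi : config) (H : int -> bool) : R := ((hits H)%:R + U) * w (xi x) / M%:R.

Lemma hitsU_ge0 H : 0 <= (hits H)%:R + U.
Proof. by rewrite addr_ge0 ?U_ge0. Qed.

Lemma pot_ge0 xi H : 0 <= pot xi H.
Proof. by rewrite /pot divr_ge0 // mulr_ge0 ?w_ge0 ?hitsU_ge0. Qed.

Definition admissible (xi : config) (H : int -> bool) : Prop :=
  [/\ (xi x <= N)%N, forall z, z != x -> (xi z <= 1)%N &
      forall z, z != x -> (0 < xi z)%N -> H z].

Lemma rate_ge0 xi e : 0 <= rate xi e.
Proof.
case: e => [z|[v z]] //=; case: ifP => _; first by rewrite mulr_ge0 ?divr_ge0.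
by case: ifP => _ //; rewrite !mulr_ge0 ?divr_ge0.
Qed.

Lemma rate_from_other xi H v z : admissible xi H -> v != x -> rate xi (inr (v, z)) = 0.
Proof.
case=> _ le1 _ vx /=; have -> : (xi v * (xi v).-1 = 0)%N by case: (xi v) (le1 v vx) => [|[]].
by rewrite !mul0n !mulr0; case: ifP => // _; case: ifP.
Qed.

Lemma rate_birth_le xi : (xi x <= N)%N -> rate xi (inr (x, x)) <= a * (xi x)%:R.
Proof. by move=> jN; rewrite /= eqxx mass_action_le. Qed.

Lemma rate_dispersal_le xi z : (xi x <= N)%N -> z != x ->
  rate xi (inr (x, z)) <= (2 * M)%:R^-1 * (b * (xi x)%:R).
Proof.
move=> jN zx; rewrite /= (negbTE zx); case: ifP => _; last first.
  by rewrite mulr_ge0 ?mulr_ge0.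
by rewrite -mulrA ler_wpM2l ?mass_action_le.
Qed.

Lemma admissible_step xi H e : admissible xi H -> 0 < rate xi e -> ~~ collides x H e ->
  admissible (step xi e) (upd_hit x H e).
Proof.
move=> adm; have [jN le1 hit] := adm.
case: e => [z|[v z]] r0 ncol /=.
  split=> [|y yx|y yx]; case: ifP => _ //.
  - exact: leq_trans (leq_pred _) jN.
  - exact: leq_trans (leq_pred _) (le1 _ yx).
  - exact: le1.
  - by move=> pos; apply: hit yx _; lia.
  - exact: hit.
have /eqP vx : v == x by apply: contraTT r0 => vnx; rewrite (rate_from_other z adm vnx) ltxx.
subst v; rewrite eqxx /= in ncol *.
have [ezx | zx] := eqVneq z x.
  subst z; move: r0; rewrite /= eqxx => r0.
  have jN' : (xi x < N)%N.
    rewrite ltnNge; apply: contraTN r0 => Nj.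
    have -> : (N - xi x = 0)%N by apply/eqP; rewrite subn_eq0.
    by rewrite muln0 mulr0 ltxx.
  split=> [|y yx|y yx]; rewrite ?eqxx ?(negbTE yx) //.
  - exact: le1.
  - exact: hit.
rewrite zx /= in ncol *; rewrite eqxx /= in ncol.
have xi_z : xi z = 0%N by case: (posnP (xi z)) => // /(hit _ zx); rewrite (negbTE ncol).
split=> [|y yx|y yx].
- by rewrite eq_sym (negbTE zx).
- by case: eqVneq => [->|_]; [rewrite xi_z | exact: le1].
- by case: (eqVneq y z) => //= _; exact: hit.
Qed.

Definition score xi H e : R :=
  if collides x H e then 1 else pot (step xi e) (upd_hit x H e).

Definition drift xi H e : R := rate xi e * (score xi H e - pot xi H).

Definition jumps_from_x : seq event := [seq inr (x, z) | z <- window].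

Lemma x_in_window : x \in window.
Proof. by apply/mapP; exists M; rewrite ?mem_iota //; lia. Qed.

Lemma jumps_from_x_uniq : uniq jumps_from_x.
Proof. by rewrite map_inj_uniq ?window_uniq // => ? ? []. Qed.

Lemma score_ge0 xi H e : 0 <= score xi H e.
Proof. by rewrite /score; case: ifP => _ //; exact: pot_ge0. Qed.

Lemma drift_death xi H : drift xi H (inl x) =
  - ((xi x)%:R * (((hits H)%:R + U) * (w (xi x) - w (xi x).-1) / M%:R)).
Proof. by rewrite /drift /score /pot /= eqxx; ring. Qed.

Lemma drift_death_le0 xi H : drift xi H (inl x) <= 0.
Proof.
rewrite drift_death oppr_le0 mulr_ge0 // divr_ge0 // mulr_ge0 ?hitsU_ge0 //.
by rewrite subr_ge0; case: (xi x) => [|j] //; exact: w_leS.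
Qed.

Lemma drift_birth_le xi H : admissible xi H -> drift xi H (inr (x, x)) <=
  a * (xi x)%:R * (((hits H)%:R + U) * (w (xi x).+1 - w (xi x)) / M%:R).
Proof.
case=> jN _ _; rewrite /drift.
have -> : score xi H (inr (x, x)) = pot (step xi (inr (x, x))) H by rewrite /score /= eqxx andbF.
rewrite /pot (_ : step xi _ x = (xi x).+1); last by rewrite /= eqxx.
rewrite -mulrBl -mulrBr; apply: ler_wpM2r; last exact: rate_birth_le.
by rewrite divr_ge0 // mulr_ge0 ?hitsU_ge0 // subr_ge0 w_leS.
Qed.

Lemma drift_dispersal_le xi H z : admissible xi H -> z != x ->
  drift xi H (inr (x, z)) <= (2 * M)%:R^-1 * (b * (xi x)%:R) * ((H z)%:R + w (xi x) / M%:R).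
Proof.
case=> jN _ _ zx.
have wM0 : 0 <= w (xi x) / M%:R by rewrite divr_ge0 ?w_ge0.
have gain : score xi H (inr (x, z)) - pot xi H <= (H z)%:R + w (xi x) / M%:R.
  have -> : score xi H (inr (x, z)) =
      if H z then 1 else pot (step xi (inr (x, z))) (upd_hit x H (inr (x, z))).
    by rewrite /score /= eqxx zx.
  case: (H z); rewrite /nat_of_bool ?mulr1n ?mulr0n ?add0r; first by have := pot_ge0 xi H; lra.
  have hk : (hits (upd_hit x H (inr (x, z))))%:R <= (hits H)%:R + 1 :> R.
    by rewrite natr1 ler_nat hits_upd.
  rewrite /pot (_ : step xi _ x = xi x) -?mulrBl -?mulrBl; last by rewrite /= eq_sym (negbTE zx).
  by rewrite ler_wpM2r ?invr_ge0 // -[leRHS]mul1r ler_wpM2r ?w_ge0 //; lra.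
apply: le_trans (ler_wpM2l (rate_ge0 _ _) gain) _.
by rewrite ler_wpM2r ?rate_dispersal_le ?addr_ge0.
Qed.

Lemma drift_gt0_jump_from_x xi H e : admissible xi H -> 0 < drift xi H e -> e \in jumps_from_x.
Proof.
move=> adm; case: e => [z|[v z]] d0.
  have [ezx|zx] := eqVneq z x; first by rewrite ezx ltNge drift_death_le0 in d0.
  suff : drift xi H (inl z) = 0 by move=> d00; rewrite d00 ltxx in d0.
  by rewrite /drift /score /pot /= eq_sym (negbTE zx) subrr mulr0.
have [vx|vx] := eqVneq v x; last first.
  by rewrite /drift (rate_from_other z adm vx) mul0r ltxx in d0.
subst v; apply/mapP; exists z => //.
have [ezx|zx] := eqVneq z x; first by rewrite ezx x_in_window.
case nb: (nbr M z x); first exact: nbr_in_window.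
by rewrite /drift /= (negbTE zx) nb mul0r ltxx in d0.
Qed.

Lemma drift_balance xi H : admissible xi H ->
  drift xi H (inl x) + \sum_(e <- jumps_from_x) Num.max (drift xi H e) 0 <= 0.
Proof.
move=> adm; have [jN _ _] := adm; set j := xi x.
have [j1|j2] := leqP j 1.
  rewrite big1_seq ?addr0 ?drift_death_le0 // => _ /mapP[z _ ->].
  suff r0 : rate xi (inr (x, z)) = 0 by rewrite /drift r0 mul0r maxxx.
  have jj : (xi x * (xi x).-1 = 0)%N by rewrite -/j; case: (j) j1 => [|[]].
  by rewrite /= jj !mul0n !mulr0; case: ifP => // _; case: ifP.
set c := (2 * M)%:R^-1 * (b * j%:R).
have c0 : 0 <= c by rewrite mulr_ge0 ?mulr_ge0.
have disp : \sum_(z <- window | z != x) Num.max (drift xi H (inr (x, z))) 0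
    <= c * ((hits H)%:R + (2 * M%:R + 1) * (w j / M%:R)).
  apply: le_trans (_ : \sum_(z <- window) c * ((H z)%:R + w j / M%:R) <= _); last first.
    by rewrite sum_mul_count size_window -natr1 natrM.
  have wM0 : 0 <= w j / M%:R by rewrite divr_ge0 ?w_ge0.
  rewrite [leRHS](bigD1_seq x) ?x_in_window ?window_uniq //= -[leLHS]add0r.
  apply: lerD; first by rewrite mulr_ge0 ?addr_ge0.
  apply: ler_sum => z zx.
  by rewrite ge_max drift_dispersal_le // mulr_ge0 ?addr_ge0.
have birth : Num.max (drift xi H (inr (x, x))) 0
    <= a * j%:R * (((hits H)%:R + U) * (w j.+1 - w j) / M%:R).
  rewrite ge_max drift_birth_le //= !mulr_ge0 ?invr_ge0 ?hitsU_ge0 //.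
  by rewrite subr_ge0 w_leS.
rewrite big_map (bigD1_seq x) ?x_in_window ?window_uniq //= drift_death addrA.
apply: le_trans (lerD (lerD (lexx _) birth) disp) _.
rewrite /c natrM; apply: drift_budget => //; rewrite ?ler1n ?w_ge0 ?w_le_U ?w_drift //.
by rewrite j2.
Qed.

Lemma sum_score_le xi H (t : R) (s : seq event) : admissible xi H -> 0 < t -> uniq s ->
  (forall s', uniq s' -> \sum_(e <- s') rate xi e <= t) ->
  \sum_(e <- s) rate xi e / t * score xi H e <= pot xi H.
Proof.
move=> adm t0 us rate_le.
have term_ge0 e : 0 <= rate xi e / t * score xi H e.
  by rewrite mulr_ge0 ?divr_ge0 ?rate_ge0 ?score_ge0 ?ltW.
(* Adding the death at [x] to [s] only increases the sum and makes its negative drift available. *)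
set s1 := if inl x \in s then s else inl x :: s.
have us1 : uniq s1 by rewrite /s1; case: ifPn => // xs; rewrite cons_uniq xs.
have xs1 : inl x \in s1 by rewrite /s1; case: ifPn => // _; rewrite inE eqxx.
apply: le_trans (_ : _ <= \sum_(e <- s1) rate xi e / t * score xi H e) _.
  by rewrite /s1; case: ifP => // _; rewrite big_cons lerDr.
have -> : \sum_(e <- s1) rate xi e / t * score xi H e
    = (\sum_(e <- s1) (pot xi H * rate xi e + drift xi H e)) / t.
  by rewrite mulr_suml; apply: eq_bigr => e _; rewrite /drift; field; rewrite lt0r_neq0.
have drift_le0 : \sum_(e <- s1) drift xi H e <= 0.
  rewrite (bigD1_seq (inl x)) //=; apply: le_trans (drift_balance adm); rewrite lerD2l.
  apply: le_trans (_ : _ <= \sum_(e <- s1) Num.max (drift xi H e) 0) _.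
    rewrite [leRHS](bigD1_seq (inl x)) //= -[leLHS]add0r.
    by apply: lerD; [rewrite le_max lexx orbT | apply: ler_sum => e _; rewrite le_max lexx].
  apply: ler_sum_supp => //; first exact: jumps_from_x_uniq.
    move=> e ne0; apply: (drift_gt0_jump_from_x adm); rewrite ltNge.
    by apply: contra ne0 => d0; rewrite max_r.
  by move=> e _; rewrite le_max lexx orbT.
rewrite big_split /= -mulr_sumr ler_pdivrMr //.
by apply: le_trans (lerD (ler_wpM2l (pot_ge0 _ _) (rate_le s1 us1)) drift_le0) _; rewrite addr0.
Qed.

Lemma esum_score_le xi H : admissible xi H ->
  (\esum_(e in [set: event]) (rate xi e / fine (total_rate N M a b xi) * score xi H e)%:E
     <= (pot xi H)%:E)%E.
Proof.
move=> adm; have pot0 := pot_ge0 xi H.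
have T0 : (0 <= total_rate N M a b xi)%E.
  by apply: esum_ge0 => e _; rewrite lee_fin rate_ge0.
have sum_le_T s : uniq s -> ((\sum_(e <- s) rate xi e)%:E <= total_rate N M a b xi)%E.
  move=> us; rewrite -sumEFin (fsbig_seq _ _ us).
  by apply: esum_ge; exists [set` s]%classic => //; split => //; exact: finite_seq.
case E : (total_rate N M a b xi) => [t| |] /=; last by rewrite E in T0.
- have [->|tn0] := eqVneq t 0.
    by rewrite esum1 ?lee_fin // => e _; rewrite invr0 mulr0 mul0r.
  have t0 : 0 < t by rewrite lt_neqAle eq_sym tn0 -lee_fin -E.
  apply: ge_ereal_sup => _ [A [finA _] <-].
  rewrite (fsbig_finite _ _ finA) /= sumEFin lee_fin.
  apply: sum_score_le => //; first exact: finmap.fset_uniq.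
  by move=> s us; rewrite -lee_fin -E sum_le_T.
- by rewrite esum1 ?lee_fin // => e _; rewrite invr0 mulr0 mul0r.
Qed.

Lemma Pcol_le_pot n xi H : admissible xi H -> (Pcol N M a b x n xi H <= (pot xi H)%:E)%E.
Proof.
elim: n xi H => [|n IH] xi H adm /=; first by rewrite lee_fin pot_ge0.
apply: le_trans (esum_score_le adm); apply: le_esum => e _.
have [r0|rn0] := eqVneq (rate xi e) 0; first by rewrite r0 !mul0r mul0e.
rewrite /score; case: ifPn => col; first by rewrite mule1 mulr1.
rewrite [X in (_ <= X)%E]EFinM; apply: lee_wpmul2l.
  by rewrite lee_fin divr_ge0 ?rate_ge0 ?fine_ge0 // esum_ge0 // => e' _; rewrite lee_fin rate_ge0.
by apply: IH; apply: admissible_step; rewrite // lt_neqAle eq_sym rn0 rate_ge0.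
Qed.

Lemma pot_one_at : pot (one_at N x) (fun _ => false) <= U ^+ 2 / M%:R.
Proof.
rewrite /pot /hits count_pred0 add0r /one_at eqxx expr2 -!mulrA ler_wpM2l ?U_ge0 //.
by rewrite ler_wpM2r ?invr_ge0 ?w_le_U.
Qed.

Lemma admissible_one_at : admissible (one_at N x) (fun _ => false).
Proof. by split=> [|z zx|z zx]; rewrite /one_at ?eqxx // (negbTE zx). Qed.

End CollisionBound.

Theorem lemma5p2 (R : realType) (N : nat) (a b : R) (x : int) :
  (2 <= N)%N -> 0 <= a -> 0 <= b ->
  exists M0 : nat, forall M : nat, (M0 <= M)%N ->
    let bound := (M%:R : R) `^ (- 3^-1) in
    [/\ a < 4 ->
          (P_collision N M a b x <= (bound * (2^-1 + b * N%:R * (1 - a / 4)^-1))%:E)%E,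
        a = 4 ->
          (P_collision N M a b x <= (bound * (2^-1 + b / 2 * (N%:R + 2) ^+ 2))%:E)%E
      & 4 < a ->
          (P_collision N M a b x
             <= (bound * (2^-1 + b * (a / 4 - 1) ^- 2 * (a / 4) ^+ (N + 2)))%:E)%E].
Proof.
move=> hN ha hb; set C := 2 * U N a b ^+ 2.
have C1 : 1 <= C by have := exprn_ege1 2 (U_ge1 N ha hb); rewrite /C; lra.
exists (Num.truncn (C ^+ 3)).+1 => M M0M bound.
have hM : (1 <= M)%N by apply: leq_trans M0M.
have CM : C ^+ 3 < M%:R by apply: lt_le_trans (truncnS_gt _) _; rewrite ler_nat.
have half : (P_collision N M a b x <= (bound / 2)%:E)%E.
  apply: ge_ereal_sup => _ [n _ <-].
  apply: le_trans (Pcol_le_pot hN ha hb hM n (admissible_one_at N x)) _.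
  rewrite lee_fin (le_trans (pot_one_at N M x ha hb)) //.
  by have := le_powR_cbrt C1 CM; rewrite /C -/bound; lra.
have le_bound e : 0 <= e -> (P_collision N M a b x <= (bound * (2^-1 + e))%:E)%E.
  move=> e0; apply: le_trans half _; rewrite lee_fin mulrDr.
  have : 0 <= bound * e by rewrite mulr_ge0 ?powR_ge0.
  lra.
split=> a4; apply: le_bound.
- by rewrite !mulr_ge0 // invr_ge0; lra.
- by rewrite mulr_ge0 ?sqr_ge0 ?divr_ge0.
- by rewrite !mulr_ge0 ?exprn_ge0 ?invr_ge0 ?exprn_ge0 //; lra.
Qed.
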